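(* Let $\mathcal{H}$ be a reproducing kernel Hilbert space (RKHS) of real-valued functions on the state-action space $\mathfrak{Z} \coloneqq \mathfrak{S} \times \mathfrak{A}$ (state space $\mathfrak{S} \subset \mathbb{R}^D$, action space $\mathfrak{A}$), with inner product $\langle\cdot,\cdot\rangle_{\mathcal{H}}$, norm $\|\cdot\|_{\mathcal{H}}$, reproducing kernel $\kappa$ and feature map $\varphi(\mathbf{z}) \coloneqq \kappa(\mathbf{z},\cdot)$. Let $\mathcal{M}$ be the set of all mappings (stationary policies) $\mu \colon \mathfrak{S} \to \mathfrak{A}$, let $g \in \mathcal{H}$, $\alpha > 0$, let $\{\mathbf{s}_i^{\mathrm{av}}\}_{i=1}^{N_{\mathrm{av}}} \subset \mathfrak{S}$ be user-chosen states, and let $\{\psi_i\}_{i=1}^{N_{\mathrm{av}}} \subset \mathcal{H}$, with $\boldsymbol{\Psi} \coloneqq [\psi_1, \ldots, \psi_{N_{\mathrm{av}}}]$. For $\mu \in \mathcal{M}$ define $\boldsymbol{\Phi}_{\mu}^{\mathrm{av}} \coloneqq [\varphi(\mathbf{s}_1^{\mathrm{av}}, \mu(\mathbf{s}_1^{\mathrm{av}})), \ldots, \varphi(\mathbf{s}_{N_{\mathrm{av}}}^{\mathrm{av}}, \mu(\mathbf{s}_{N_{\mathrm{av}}}^{\mathrm{av}}))]$, and the $N_{\mathrm{av}} \times N_{\mathrm{av}}$ kernel matrices $\mathbf{K}_{\Psi} \coloneqq \boldsymbol{\Psi}^{\intercal}\boldsymbol{\Psi}$ (entries $\langle \psi_i,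 \psi_j\rangle_{\mathcal{H}}$) and $\mathbf{K}_{\mu}^{\mathrm{av}} \coloneqq \boldsymbol{\Phi}_{\mu}^{\mathrm{av}\intercal}\boldsymbol{\Phi}_{\mu}^{\mathrm{av}}$ (entries $\kappa((\mathbf{s}_i^{\mathrm{av}}, \mu(\mathbf{s}_i^{\mathrm{av}})), (\mathbf{s}_j^{\mathrm{av}}, \mu(\mathbf{s}_j^{\mathrm{av}})))$). Define the Bellman mappings $T_{\mu}, T \colon \mathcal{H} \to \mathcal{H}$ by $T_{\mu}(Q) \coloneqq g + \alpha \sum_{i=1}^{N_{\mathrm{av}}} Q(\mathbf{s}_i^{\mathrm{av}}, \mu(\mathbf{s}_i^{\mathrm{av}}))\, \psi_i = g + \alpha \boldsymbol{\Psi}\boldsymbol{\Phi}_{\mu}^{\mathrm{av}\intercal} Q$ and $T(Q) \coloneqq g + \alpha \sum_{i=1}^{N_{\mathrm{av}}} \inf_{a \in \mathfrak{A}} Q(\mathbf{s}_i^{\mathrm{av}}, a)\, \psi_i$. Then for all $Q_1, Q_2 \in \mathcal{H}$ and all $\mu \in \mathcal{M}$, $\|T_{\mu}(Q_1) - T_{\mu}(Q_2)\|_{\mathcal{H}} \leq \beta \|Q_1 - Q_2\|_{\mathcal{H}}$ and $\|T(Q_1) - T(Q_2)\|_{\mathcal{H}} \leq \beta \|Q_1 - Q_2\|_{\mathcal{H}}$, where $\beta \coloneqq \alpha \big( \|\mathbf{K}_{\Psi}\|_2 \, \sup_{\mu' \in \mathcal{M}} \|\mathbf{K}_{\mu'}^{\mathrm{av}}\|_2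 \big)^{1/2}$ and $\|\cdot\|_2$ is the spectral norm of a matrix. Hence, if $\beta = 1$ the mappings $T_{\mu}, T$ are nonexpansive, and if $\beta < 1$ they are contractions in $(\mathcal{H}, \langle\cdot,\cdot\rangle_{\mathcal{H}})$.
   Context: Setting: nonparametric Bellman mappings for reinforcement learning defined directly in an RKHS, where the one-step loss $g$ and the Q-functions belong to $\mathcal{H}$; the functions $\psi_i$ and states $\mathbf{s}_i^{\mathrm{av}}$ are user-chosen design parameters used to approximate the conditional expectation of the classical Bellman maps by sample averaging. *)

From HB Require Import structures.
From mathcomp Require Import all_boot all_order all_algebra.
From mathcomp Require Import all_classical all_reals.
Set Implicit Arguments. Unset Strict Implicit. Unset Printing Implicit Defensive.
Import Order.TTheory GRing.Theory Num.Theory.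
Local Open Scope ring_scope.
Local Open Scope classical_set_scope.

Section RKHSDefs.
Variable R : realType.

Definition is_inner_product (H : lmodType R) (ip : H -> H -> R) : Prop :=
  [/\ (forall x y, ip x y = ip y x),
      (forall (a : R) x y z, ip (a *: x + y) z = a * ip x z + ip y z),
      (forall x, 0 <= ip x x) &
      (forall x, ip x x = 0 -> x = 0)].

Definition ipnorm (H : lmodType R) (ip : H -> H -> R) (x : H) : R :=
  Num.sqrt (ip x x).

Definition ip_complete (H : lmodType R) (ip : H -> H -> R) : Prop :=
  forall u : nat -> H,
    (forall e : R, 0 < e -> exists N : nat, forall m n : nat,
        (N <= m)%N -> (N <= n)%N -> ipnorm ip (u m - u n) < e) ->
    exists l : H, forall e : R, 0 < e -> exists N : nat, forall n : nat,
        (N <= n)%N -> ipnorm ip (u n - l) < e.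

(* (H, ip) is a reproducing kernel Hilbert space of real-valued functions on Z,
   where [ev f z] is the value f(z) of the function f : H at z, and kappa is the
   reproducing kernel: the feature map phi(z) = kappa(z, .) lies in H and
   <f, phi(z)>_H = f(z). *)
Definition is_RKHS (Z : Type) (H : lmodType R) (ip : H -> H -> R)
    (ev : H -> Z -> R) (kappa : Z -> Z -> R) : Prop :=
  [/\ is_inner_product ip,
      ip_complete ip,
      (forall (a : R) f g z, ev (a *: f + g) z = a * ev f z + ev g z),
      (forall f g : H, (forall z, ev f z = ev g z) -> f = g) &
      (forall z : Z, exists phiz : H,
          (forall z', ev phiz z' = kappa z z') /\
          (forall f : H, ip f phiz = ev f z))].

Definition vnorm (n : nat) (x : 'cV[R]_n) : R :=
  Num.sqrt (\sum_(i < n) (x i 0) ^+ 2).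

Definition specnorm (n : nat) (M : 'M[R]_n) : R :=
  sup [set vnorm (M *m x) | x in [set x : 'cV[R]_n | vnorm x <= 1]].

End RKHSDefs.

(* Write c_i := (Q1 - Q2)(z_i) for the sampled points z_i = (s_i, mu(s_i)).
   Then T_mu(Q1) - T_mu(Q2) = alpha * Psi c and ||Psi c||^2 = c^T K_Psi c <= ||K_Psi|| |c|^2.
   By the reproducing property |c|^2 = <Q1 - Q2, Phi_mu c> <= ||Q1 - Q2|| ||Phi_mu c||, and
   ||Phi_mu c||^2 <= ||K_mu|| |c|^2, so |c|^2 <= ||K_mu|| ||Q1 - Q2||^2.
   For T the coefficients are differences of infima; for every t < 1 there is a policy
   mu_t whose samples dominate t times these differences, which reduces T to T_mu_t. *)
From HB Require Import structures.
From mathcomp Require Import all_boot all_order all_algebra.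
From mathcomp Require Import all_classical all_reals unstable.
From mathcomp Require Import lra.
Import Order.TTheory GRing.Theory Num.Theory.
Set Implicit Arguments. Unset Strict Implicit.
Local Open Scope ring_scope.
Local Open Scope classical_set_scope.

Section InnerProduct.
Variables (R : realType) (H : lmodType R) (ip : H -> H -> R).
Hypothesis hip : is_inner_product ip.

Lemma ipC x y : ip x y = ip y x. Proof. by case: hip. Qed.

Lemma ipZDl a x y z : ip (a *: x + y) z = a * ip x z + ip y z.
Proof. by case: hip. Qed.

Lemma ip_ge0 x : 0 <= ip x x. Proof. by case: hip. Qed.

Lemma ip_eq0 x : ip x x = 0 -> x = 0. Proof. by case: hip => _ _ _; apply. Qed.

Lemma ip0l z : ip 0 z = 0.
Proof. by have := ipZDl (-1) 0 0 z; rewrite scaler0 addr0 mulN1r addNr. Qed.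

Lemma ipDl x y z : ip (x + y) z = ip x z + ip y z.
Proof. by rewrite -{1}[x]scale1r ipZDl mul1r. Qed.

Lemma ipZl a x z : ip (a *: x) z = a * ip x z.
Proof. by rewrite -[a *: x]addr0 ipZDl ip0l addr0. Qed.

Lemma ip0r z : ip z 0 = 0. Proof. by rewrite ipC ip0l. Qed.

Lemma ipDr x y z : ip z (x + y) = ip z x + ip z y.
Proof. by rewrite ipC ipDl ipC [ip y z]ipC. Qed.

Lemma ipZr a x z : ip z (a *: x) = a * ip z x.
Proof. by rewrite ipC ipZl ipC. Qed.

Lemma ip_suml n (F : 'I_n -> H) z : ip (\sum_i F i) z = \sum_i ip (F i) z.
Proof. by elim/big_rec2: _ => [|i y1 y2 _ <-]; rewrite ?ip0l ?ipDl. Qed.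

Lemma ip_sumr n (F : 'I_n -> H) z : ip z (\sum_i F i) = \sum_i ip z (F i).
Proof. by rewrite ipC ip_suml; apply: eq_bigr => i _; rewrite ipC. Qed.

Lemma ip_CauchySchwarz x y : ip x y ^+ 2 <= ip x x * ip y y.
Proof.
have [yy0|yy_neq0] := eqVneq (ip y y) 0.
  by rewrite (ip_eq0 yy0) !ip0r expr0n /= mulr0.
have yy_gt0 : 0 < ip y y by rewrite lt_def yy_neq0 ip_ge0.
(* expand 0 <= <x - t y, x - t y> at the minimiser t = <x, y> / <y, y> *)
set t := ip x y / ip y y.
have ht : t * ip y y = ip x y by rewrite /t divfK.
have := ip_ge0 (x + (- t) *: y).
rewrite ipDl !ipZl !ipDr !ipZr [ip y x]ipC.
move: ht yy_gt0; set a := ip x x; set b := ip x y; set c := ip y y => ht hc h.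
nra.
Qed.

Lemma ip_le_ipnorm x y : ip x y <= ipnorm ip x * ipnorm ip y.
Proof.
rewrite /ipnorm -sqrtrM ?ip_ge0 //; apply: le_trans (ler_norm _) _.
by rewrite -sqrtr_sqr; apply: ler_wsqrtr; exact: ip_CauchySchwarz.
Qed.

Lemma ipnormZ a x : ipnorm ip (a *: x) = `|a| * ipnorm ip x.
Proof.
by rewrite /ipnorm ipZl ipZr mulrA -expr2 sqrtrM ?sqr_ge0 // sqrtr_sqr.
Qed.

End InnerProduct.

Section EuclideanSpace.
Variables (R : realType) (n : nat).

Definition dot (x y : 'cV[R]_n) : R := \sum_i x i 0 * y i 0.

Lemma dot_is_inner_product : is_inner_product dot.
Proof.
split.
- by move=> x y; apply: eq_bigr => i _; rewrite mulrC.
- move=> a x y z; rewrite /dot mulr_sumr -big_split /=; apply: eq_bigr => i _.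
  by rewrite !mxE mulrDl mulrA.
- by move=> x; apply: sumr_ge0 => i _; rewrite -expr2 sqr_ge0.
- move=> x /eqP; rewrite psumr_eq0 => [/allP x0|i _]; last by rewrite -expr2 sqr_ge0.
  apply/matrixP => i j; rewrite (ord1 j) mxE.
  by have /= := x0 i (mem_index_enum _); rewrite mulf_eq0 orbb => /eqP.
Qed.

Lemma vnorm_ipnorm (x : 'cV[R]_n) : vnorm x = ipnorm dot x.
Proof. by rewrite /vnorm /ipnorm /dot; congr Num.sqrt; apply: eq_bigr => i _; rewrite expr2. Qed.

Lemma vnorm_sqr (x : 'cV[R]_n) : vnorm x ^+ 2 = dot x x.
Proof. by rewrite vnorm_ipnorm sqr_sqrtr // (ip_ge0 dot_is_inner_product). Qed.

Lemma vnorm_ge0 (x : 'cV[R]_n) : 0 <= vnorm x. Proof. exact: sqrtr_ge0. Qed.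

Lemma vnorm0 : vnorm (0 : 'cV[R]_n) = 0.
Proof. by rewrite /vnorm big1 ?sqrtr0 // => i _; rewrite mxE expr0n. Qed.

Lemma vnormZ (c : R) (x : 'cV[R]_n) : vnorm (c *: x) = `|c| * vnorm x.
Proof. by rewrite !vnorm_ipnorm (ipnormZ dot_is_inner_product). Qed.

Lemma has_sup_specnorm_set (M : 'M[R]_n) :
  has_sup [set vnorm (M *m x) | x in [set x : 'cV[R]_n | vnorm x <= 1]].
Proof.
split; first by exists (vnorm (M *m 0)), 0 => //=; rewrite vnorm0.
(* the Frobenius norm of M is an upper bound *)
exists (Num.sqrt (\sum_i dot (\col_j M i j) (\col_j M i j))).
move=> _ [x /= x_le1 <-]; rewrite /vnorm; apply: ler_wsqrtr; apply: ler_sum => i _.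
have -> : (M *m x) i 0 = dot (\col_j M i j) x.
  by rewrite mxE; apply: eq_bigr => j _; rewrite mxE.
have xx_le1 : dot x x <= 1 by rewrite -vnorm_sqr; have := vnorm_ge0 x; nra.
have := ip_CauchySchwarz dot_is_inner_product (\col_j M i j) x.
have := ip_ge0 dot_is_inner_product (\col_j M i j).
nra.
Qed.

Lemma specnorm_ub (M : 'M[R]_n) (x : 'cV[R]_n) :
  vnorm x <= 1 -> vnorm (M *m x) <= specnorm M.
Proof. by move=> x_le1; apply: sup_upper_bound; [exact: has_sup_specnorm_set|exists x]. Qed.

Lemma specnorm_ge0 (M : 'M[R]_n) : 0 <= specnorm M.
Proof. by rewrite -vnorm0 -(mulmx0 _ M); apply: specnorm_ub; rewrite vnorm0. Qed.

Lemma vnorm_mulmx_le (M : 'M[R]_n) (x : 'cV[R]_n) :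
  vnorm (M *m x) <= specnorm M * vnorm x.
Proof.
have [x0|x_neq0] := eqVneq (vnorm x) 0.
  have -> : x = 0 by apply: (ip_eq0 dot_is_inner_product); rewrite -vnorm_sqr x0 expr0n.
  by rewrite mulmx0 !vnorm0 mulr0.
have x_gt0 : 0 < vnorm x by rewrite lt_def x_neq0 vnorm_ge0.
have := specnorm_ub M (x := (vnorm x)^-1 *: x).
rewrite vnormZ -scalemxAr vnormZ ger0_norm ?invr_ge0 ?vnorm_ge0 // mulVf // lexx.
by move=> /(_ isT); rewrite -(ler_pM2r x_gt0) mulrAC mulVf // mul1r.
Qed.

End EuclideanSpace.

Section Gram.
Variables (R : realType) (H : lmodType R) (ip : H -> H -> R).
Hypothesis hip : is_inner_product ip.

Definition gram n (w : 'I_n -> H) : 'M[R]_n := \matrix_(i, j) ip (w i) (w j).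

Lemma ip_comb_le n (w : 'I_n -> H) (v : 'I_n -> R) :
  ip (\sum_i v i *: w i) (\sum_i v i *: w i) <= specnorm (gram w) * \sum_i v i ^+ 2.
Proof.
set vv : 'cV[R]_n := \col_i v i.
have -> : ip (\sum_i v i *: w i) (\sum_i v i *: w i) = dot vv (gram w *m vv).
  rewrite (ip_suml hip) /dot; apply: eq_bigr => i _.
  rewrite (ipZl hip) (ip_sumr hip) !mxE; congr (_ * _); apply: eq_bigr => j _.
  by rewrite (ipZr hip) !mxE mulrC.
have -> : \sum_i v i ^+ 2 = vnorm vv ^+ 2.
  by rewrite vnorm_sqr /dot; apply: eq_bigr => i _; rewrite mxE expr2.
apply: le_trans (ip_le_ipnorm (dot_is_inner_product _ _) _ _) _; rewrite -!vnorm_ipnorm.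
rewrite expr2 mulrCA; apply: ler_wpM2l; first exact: vnorm_ge0.
exact: vnorm_mulmx_le.
Qed.

Lemma ipnorm_bellman_diff_le n (g : H) (alpha S : R) (psi : 'I_n -> H)
    (a b : 'I_n -> R) (Q : H) :
  0 < alpha -> 0 <= S -> \sum_i (a i - b i) ^+ 2 <= S * ip Q Q ->
  ipnorm ip ((g + alpha *: \sum_i a i *: psi i) - (g + alpha *: \sum_i b i *: psi i))
    <= alpha * Num.sqrt (specnorm (gram psi) * S) * ipnorm ip Q.
Proof.
move=> alpha_gt0 S_ge0 ab_le.
have -> : (g + alpha *: \sum_i a i *: psi i) - (g + alpha *: \sum_i b i *: psi i)
    = alpha *: \sum_i (a i - b i) *: psi i.
  rewrite opprD addrACA subrr add0r -scalerBr -sumrB.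
  by congr (_ *: _); apply: eq_bigr => i _; rewrite scalerBl.
rewrite (ipnormZ hip) gtr0_norm // -mulrA ler_pM2l //.
rewrite /ipnorm -sqrtrM; last exact: mulr_ge0 (specnorm_ge0 _) S_ge0.
apply: ler_wsqrtr.
apply: le_trans (ip_comb_le _ _) _.
by rewrite -mulrA; apply: ler_wpM2l => //; exact: specnorm_ge0.
Qed.

End Gram.

Section RKHS.
Variables (R : realType) (Z : Type) (H : lmodType R) (ip : H -> H -> R).
Variables (ev : H -> Z -> R) (kappa : Z -> Z -> R).
Hypothesis hH : is_RKHS ip ev kappa.

Lemma RKHS_inner_product : is_inner_product ip. Proof. by case: hH. Qed.

Lemma evB f g z : ev (f - g) z = ev f z - ev g z.
Proof.
case: hH => _ _ evZD _ _.
by rewrite -scaleN1r addrC evZD mulN1r addrC.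
Qed.

Lemma sum_sqr_ev_le n (z : 'I_n -> Z) (Q : H) :
  \sum_i ev Q (z i) ^+ 2 <= specnorm (\matrix_(i, j) kappa (z i) (z j)) * ip Q Q.
Proof.
have hip := RKHS_inner_product.
case: hH => _ _ _ _ /choice[phi phiP].
set s := \sum_i ev Q (z i) ^+ 2; set K := specnorm _.
set v := \sum_i ev Q (z i) *: phi (z i).
have s_ip : s = ip Q v.
  rewrite (ip_sumr hip); apply: eq_bigr => i _.
  by rewrite (ipZr hip) (proj2 (phiP _)) expr2.
have v_le : ip v v <= K * s.
  have -> : K = specnorm (gram ip (fun i => phi (z i))).
    by congr specnorm; apply/matrixP => i j; rewrite !mxE (proj2 (phiP _)) (proj1 (phiP _)).
  exact: ip_comb_le.
have s_ge0 : 0 <= s by apply: sumr_ge0 => i _; exact: sqr_ge0.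
have Kq_ge0 : 0 <= K * ip Q Q by rewrite mulr_ge0 ?specnorm_ge0 ?(ip_ge0 hip).
(* Cauchy-Schwarz gives s^2 <= <Q,Q> <v,v> <= (K <Q,Q>) s *)
have : s ^+ 2 <= K * ip Q Q * s.
  rewrite s_ip; apply: le_trans (ip_CauchySchwarz hip Q v) _; rewrite -s_ip.
  by rewrite mulrAC mulrC; apply: ler_wpM2r; first exact: ip_ge0.
nra.
Qed.

End RKHS.

Lemma le_of_forall_scaled (R : realFieldType) (x y : R) :
  0 <= y -> (forall t, 0 < t < 1 -> t * x <= y) -> x <= y.
Proof.
move=> y_ge0 scaled; apply/ler_ltP => z z_lt_x.
have [z_le0|z_gt0] := leP z 0; first exact: le_trans y_ge0.
have x_gt0 : 0 < x := lt_trans z_gt0 z_lt_x.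
have -> : z = z / x * x by rewrite divfK ?gt_eqF.
by apply: scaled; rewrite divr_gt0 //= ltr_pdivrMr // mul1r.
Qed.

Section InfRange.
Variables (R : realType) (T : Type) (f1 f2 : T -> R).
Hypotheses (hT : inhabited T) (lb1 : has_lbound (range f1)) (lb2 : has_lbound (range f2)).

Let inf_subr_le (h1 h2 : T -> R) e :
  has_lbound (range h1) -> has_lbound (range h2) -> 0 < e ->
  exists a, inf (range h1) - inf (range h2) <= h1 a - h2 a + e.
Proof.
move=> lbh1 lbh2 e_gt0; have [a0] := hT.
have h2_neq0 : range h2 !=set0 by exists (h2 a0), a0.
have [_ [a _ <-] h2a_lt] := inf_adherent e_gt0 (conj h2_neq0 lbh2).
have h1a_ge : inf (range h1) <= h1 a by apply: ge_inf lbh1 _ _; exists a.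
by exists a; lra.
Qed.

Lemma inf_range_dist_le e : 0 < e ->
  exists a, `|inf (range f1) - inf (range f2)| <= `|f1 a - f2 a| + e.
Proof.
move=> e_gt0; have [d_ge0|d_lt0] := leP 0 (inf (range f1) - inf (range f2)).
  have [a a_le] := inf_subr_le lb1 lb2 e_gt0; exists a.
  by rewrite ger0_norm //; apply: le_trans a_le _; rewrite lerD2r ler_norm.
have [a a_le] := inf_subr_le lb2 lb1 e_gt0; exists a.
rewrite ltr0_norm // opprB distrC; apply: le_trans a_le _.
by rewrite lerD2r ler_norm.
Qed.

Lemma inf_range_dist_sqr_le t : 0 <= t < 1 ->
  exists a, t * (inf (range f1) - inf (range f2)) ^+ 2 <= (f1 a - f2 a) ^+ 2.
Proof.
move=> /andP[t_ge0 t_lt1]; set d := inf _ - inf _.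
have [->|d_neq0] := eqVneq d 0.
  by have [a0] := hT; exists a0; rewrite expr0n mulr0 sqr_ge0.
have sqrt_t_lt1 : Num.sqrt t < 1 by rewrite -sqrtr1 ltr_sqrt.
have e_gt0 : 0 < (1 - Num.sqrt t) * `|d| by rewrite mulr_gt0 ?subr_gt0 ?normr_gt0.
have [a a_le] := inf_range_dist_le e_gt0; exists a.
have le_abs : Num.sqrt t * `|d| <= `|f1 a - f2 a| by move: a_le; lra.
have -> : t * d ^+ 2 = (Num.sqrt t * `|d|) ^+ 2.
  by rewrite exprMn sqr_sqrtr // real_normK ?num_real.
rewrite -[(f1 a - f2 a) ^+ 2]real_normK ?num_real //.
have := mulr_ge0 (sqrtr_ge0 t) (normr_ge0 d); nra.
Qed.

End InfRange.

Theorem theorem2 (R : realType) (D : nat) (Sset : set 'rV[R]_D) (A : Type)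
  (H : lmodType R) (ip : H -> H -> R)
  (ev : H -> ({x : 'rV[R]_D | Sset x} * A)%type -> R)
  (kappa : ({x : 'rV[R]_D | Sset x} * A)%type ->
           ({x : 'rV[R]_D | Sset x} * A)%type -> R)
  (hH : is_RKHS ip ev kappa)
  (g : H) (alpha : R) (halpha : 0 < alpha)
  (Nav : nat) (sav : 'I_Nav -> {x : 'rV[R]_D | Sset x}) (psi : 'I_Nav -> H)
  (hA : inhabited A)
  (hK : has_ubound [set specnorm
          (\matrix_(i, j) kappa (sav i, mu' (sav i)) (sav j, mu' (sav j)) : 'M[R]_Nav)
        | mu' in [set: {x : 'rV[R]_D | Sset x} -> A]])
  (hinf : forall (Q : H) (i : 'I_Nav), has_lbound [set ev Q (sav i, a) | a in [set: A]]) :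
  let Tmu := fun (mu : {x : 'rV[R]_D | Sset x} -> A) (Q : H) =>
    g + alpha *: \sum_(i < Nav) ev Q (sav i, mu (sav i)) *: psi i in
  let T := fun Q : H =>
    g + alpha *: \sum_(i < Nav) inf [set ev Q (sav i, a) | a in [set: A]] *: psi i in
  let KPsi : 'M[R]_Nav := \matrix_(i, j) ip (psi i) (psi j) in
  let Kav := fun mu : {x : 'rV[R]_D | Sset x} -> A =>
    (\matrix_(i, j) kappa (sav i, mu (sav i)) (sav j, mu (sav j)) : 'M[R]_Nav) in
  let beta := alpha * Num.sqrt (specnorm KPsi *
                 sup [set specnorm (Kav mu') | mu' in [set: {x : 'rV[R]_D | Sset x} -> A]]) in
  forall (Q1 Q2 : H) (mu : {x : 'rV[R]_D | Sset x} -> A),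
    ipnorm ip (Tmu mu Q1 - Tmu mu Q2) <= beta * ipnorm ip (Q1 - Q2) /\
    ipnorm ip (T Q1 - T Q2) <= beta * ipnorm ip (Q1 - Q2).
Proof.
move=> Tmu T KPsi Kav beta Q1 Q2 mu.
have hip := RKHS_inner_product hH; have [a0] := hA.
set Q := Q1 - Q2; pose K := sup [set specnorm (Kav mu') | mu' in [set: _ -> A]].
have Kav_le mu' : specnorm (Kav mu') <= K.
  apply: sup_upper_bound; last by exists mu'.
  by split=> //; exists (specnorm (Kav (fun=> a0))), (fun=> a0).
have K_ge0 : 0 <= K := le_trans (specnorm_ge0 _) (Kav_le mu).
have sampled_le mu' : \sum_i ev Q (sav i, mu' (sav i)) ^+ 2 <= K * ip Q Q.
  exact: le_trans (sum_sqr_ev_le hH _ Q) (ler_wpM2r (ip_ge0 hip Q) (Kav_le mu')).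
split; apply: (ipnorm_bellman_diff_le hip) => //.
  by under eq_bigr do rewrite -(evB hH); exact: sampled_le.
apply: le_of_forall_scaled => [|t /andP[t_gt0 t_lt1]]; first exact: mulr_ge0 (ip_ge0 hip Q).
pose dinf s := inf (range (fun a => ev Q1 (s, a))) - inf (range (fun a => ev Q2 (s, a))).
have /choice[mut mutP] :
    forall s, exists a, (exists i, sav i = s) -> t * dinf s ^+ 2 <= ev Q (s, a) ^+ 2.
  (* actions are chosen per state since the sampled states s_i need not be distinct *)
  move=> s.
  have [[k <-]|no_k] := pselect (exists i, sav i = s); last by exists a0 => /no_k.
  have [|a a_le] := inf_range_dist_sqr_le hA (hinf Q1 k) (hinf Q2 k) (t := t).
    by rewrite ltW.
  by exists a; rewrite (evB hH).
rewrite mulr_sumr; apply: le_trans (sampled_le mut); apply: ler_sum => i _.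
exact: (mutP _ (ex_intro _ i erefl)).
Qed.
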